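(* Modularity is not local. That is, there exist graphs $G_1=(V_1,E_1)$ and $G_2=(V_2,E_2)$, a set $V_a\subseteq V_1\cap V_2$ such that $G_1$ and $G_2$ agree on $V_a$ and on the neighborhood of $V_a$, clusterings $C_a,D_a$ of $V_a$, a clustering $C_1$ of $V_1\setminus V_a$ and a clustering $C_2$ of $V_2\setminus V_a$, such that $Q_{\mathrm{mod}}(G_1,C_a\cup C_1)\ge Q_{\mathrm{mod}}(G_1,D_a\cup C_1)$ but $Q_{\mathrm{mod}}(G_2,C_a\cup C_2)< Q_{\mathrm{mod}}(G_2,D_a\cup C_2)$.
   Context: A (symmetric weighted) graph is a pair $G=(V,E)$ of a finite set $V$ and a function $E:V\times V\to\mathbb{R}_{\ge 0}$ with $E(i,j)=E(j,i)$; self loops are allowed. A clustering of $G$ is a partition of $V$ into nonempty pairwise disjoint sets (clusters); a clustering of the empty set is the empty collection. For $c\subseteq V$ let $v_c=\sum_{i\in c}\sum_{j\in V}E(i,j)$ (volume) and $w_c=\sum_{i,j\in c}E(i,j)$ (within weight). Modularity: $Q_{\mathrm{mod}}(G,C)=\sum_{c\in C}\left(\frac{w_c}{v_V}-\left(\frac{v_c}{v_V}\right)^2\right)$ (defined when $v_V>0$). Graphs $G_1=(V_1,E_1)$, $G_2=(V_2,E_2)$ agree on $V_a\subseteq V_1\cap V_2$ and its neighborhood if $E_1(i,j)=E_2(i,j)$ for all $i\in V_a$, $j\in V_1\cap V_2$; $E_1(i,j)=0$ for all $i\in V_a$, $j\in V_1\setminus V_2$; and $E_2(i,j)=0$ for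 all $i\in V_a$, $j\in V_2\setminus V_1$. A quality function $Q$ is local if for all such $G_1,G_2,V_a$ and all clusterings $C_a,D_a$ of $V_a$, $C_1$ of $V_1\setminus V_a$, $C_2$ of $V_2\setminus V_a$, $Q(G_1,C_a\cup C_1)\ge Q(G_1,D_a\cup C_1)$ implies $Q(G_2,C_a\cup C_2)\ge Q(G_2,D_a\cup C_2)$. *)

(* Vertices live in a common finite universe T; a graph is a
   finite vertex set V : {set T} with a weight function E : T -> T -> R
   (only its values on V x V matter). *)
From HB Require Import structures.
From mathcomp Require Import all_boot all_order all_algebra.
From mathcomp Require Import reals.
Set Implicit Arguments. Unset Strict Implicit. Unset Printing Implicit Defensive.
Import Order.TTheory GRing.Theory Num.Theory.
Local Open Scope ring_scope.

Section Modularity.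
Variables (R : realType) (T : finType).

Definition is_graph (V : {set T}) (E : T -> T -> R) : Prop :=
  forall i j, i \in V -> j \in V -> 0 <= E i j /\ E i j = E j i.

Definition volume (V : {set T}) (E : T -> T -> R) (c : {set T}) : R :=
  \sum_(i in c) \sum_(j in V) E i j.

Definition within (E : T -> T -> R) (c : {set T}) : R :=
  \sum_(i in c) \sum_(j in c) E i j.

(* modularity Q_mod(G, C) (meaningful when v_V > 0) *)
Definition Qmod (V : {set T}) (E : T -> T -> R) (C : {set {set T}}) : R :=
  \sum_(c in C) (within E c / volume V E V - (volume V E c / volume V E V) ^+ 2).

Definition clustering (C : {set {set T}}) (A : {set T}) : Prop := partition C A.

Definition agree (V1 : {set T}) (E1 : T -> T -> R) (V2 : {set T}) (E2 : T -> T -> R)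
  (Va : {set T}) : Prop :=
  [/\ Va \subset V1 :&: V2,
      (forall i j, i \in Va -> j \in V1 :&: V2 -> E1 i j = E2 i j),
      (forall i j, i \in Va -> j \in V1 :\: V2 -> E1 i j = 0) &
      (forall i j, i \in Va -> j \in V2 :\: V1 -> E2 i j = 0)].

End Modularity.

(** The three vertices are a, b (each with a self-loop of weight 2, joined by
    an edge of weight 1) and c (an isolated vertex with a self-loop of weight
    10).  Merging two clusters A and B changes modularity by
    2 (w(A,B) v_V - v_A v_B) / v_V^2, so whether merging {a} and {b} pays off
    depends on the total volume v_V, i.e. on parts of the graph far away from
    a and b.  With c present (v_V = 16) the merge pays off since
    v_a v_b = 9 <= 16; without c (v_V = 6) it does not, since 9 > 6. *)
From HB Require Import structures.
From mathcomp Require Import all_boot all_order all_algebra.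
From mathcomp Require Import reals.
From mathcomp Require Import ring lra.
Set Implicit Arguments. Unset Strict Implicit. Unset Printing Implicit Defensive.
Import Order.TTheory GRing.Theory Num.Theory.
Local Open Scope ring_scope.

Section Partitions.
Variable T : finType.

Lemma set1_neq0 (x : T) : [set x] != set0.
Proof. by rewrite -card_gt0 cards1. Qed.

Lemma setU1_neq0 (x : T) (A : {set T}) : x |: A != set0.
Proof. by apply/set0Pn; exists x; rewrite setU11. Qed.

Lemma partition_set1 (B : {set T}) : B != set0 -> partition [set B] B.
Proof.
by move=> nB; rewrite /partition cover1 eqxx trivIset1 inE eq_sym nB.
Qed.

Lemma partition_set2 (A B : {set T}) :
  A != set0 -> B != set0 -> [disjoint A & B] -> partition [set A; B] (A :|: B).
Proof. by move=> nA nB AB; apply: partitionU1 => //; apply: partition_set1. Qed.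

Lemma disjoint_setD (A B : {set T}) : [disjoint A & B :\: A].
Proof. by rewrite -setI_eq0 setIDA setDIl setDv set0I. Qed.

Lemma disjoint_partitions (P Q : {set {set T}}) (X Y : {set T}) :
  partition P X -> partition Q Y -> [disjoint X & Y] -> [disjoint P & Q].
Proof.
move=> PX QY XY; rewrite -setI_eq0; apply/eqP/setP => S; rewrite !inE.
apply/negbTE/andP => -[SP SQ]; apply/negP: (partition_neq0 PX SP).
rewrite negbK -subset0 -(disjoint_setI0 XY) subsetI.
by rewrite (partitionS PX SP) (partitionS QY SQ).
Qed.

End Partitions.

Section Weights.
Variables (R : realType) (T : finType) (E : T -> T -> R).

Definition weight (A B : {set T}) : R := \sum_(i in A) \sum_(j in B) E i j.

Lemma sum_setU (F : T -> R) (A B : {set T}) : [disjoint A & B] ->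
  \sum_(i in A :|: B) F i = \sum_(i in A) F i + \sum_(i in B) F i.
Proof. by move=> AB; rewrite -bigU //; apply: eq_bigl => i; rewrite inE. Qed.

Lemma sum_set2 (F : T -> R) (x y : T) : x != y ->
  \sum_(i in [set x; y]) F i = F x + F y.
Proof. by move=> xy; rewrite big_setU1 ?big_set1 // inE. Qed.

Lemma weight_setUl (A B C : {set T}) : [disjoint A & B] ->
  weight (A :|: B) C = weight A C + weight B C.
Proof. exact: sum_setU. Qed.

Lemma weight_setUr (A B C : {set T}) : [disjoint B & C] ->
  weight A (B :|: C) = weight A B + weight A C.
Proof.
by move=> BC; rewrite /weight -big_split; apply: eq_bigr => i _; apply: sum_setU.
Qed.

Lemma weight_sym (A B : {set T}) : {in A & B, forall i j, E i j = E j i} ->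
  weight B A = weight A B.
Proof.
move=> symE; rewrite /weight exchange_big.
by apply: eq_bigr => i Ai; apply: eq_bigr => j Bj; rewrite (symE i j).
Qed.

Lemma within_setU (A B : {set T}) : [disjoint A & B] ->
  {in A & B, forall i j, E i j = E j i} ->
  within E (A :|: B) = within E A + within E B + 2 * weight A B.
Proof.
move=> AB symE; rewrite [LHS]weight_setUl // !weight_setUr // (weight_sym symE).
by rewrite /within -/(weight A A) -/(weight B B); ring.
Qed.

Lemma volume_setU (V A B : {set T}) : [disjoint A & B] ->
  volume V E (A :|: B) = volume V E A + volume V E B.
Proof. exact: weight_setUl. Qed.

End Weights.

Section Merging.
Variables (R : realType) (T : finType) (V : {set T}) (E : T -> T -> R).

Local Notation vol := (volume V E).

Lemma Qmod_setU (C D : {set {set T}}) : [disjoint C & D] ->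
  Qmod V E (C :|: D) = Qmod V E C + Qmod V E D.
Proof. exact: sum_setU. Qed.

Lemma Qmod_merge (A B : {set T}) : A != set0 -> [disjoint A & B] ->
  {in A & B, forall i j, E i j = E j i} ->
  Qmod V E [set A :|: B] - Qmod V E [set A; B] =
  2 * (weight E A B / vol V - vol A * vol B / vol V ^+ 2).
Proof.
move=> nA AB symE; have AneB : A \notin [set B].
  rewrite inE; apply: contraNneq nA => eqAB.
  by rewrite -(setIid A) {2}eqAB disjoint_setI0.
rewrite /Qmod big_setU1 //= !big_set1 within_setU // volume_setU //.
by rewrite !expr_div_n; ring.
Qed.

Lemma Qmod_merge_ge (C : {set {set T}}) (A B : {set T}) : 0 < vol V ->
  A != set0 -> [disjoint A & B] -> {in A & B, forall i j, E i j = E j i} ->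
  [disjoint [set A :|: B] & C] -> [disjoint [set A; B] & C] ->
  (Qmod V E ([set A; B] :|: C) <= Qmod V E ([set A :|: B] :|: C)) =
  (vol A * vol B <= weight E A B * vol V).
Proof.
move=> vV_gt0 nA AB symE disjM disjS.
rewrite (Qmod_setU disjM) (Qmod_setU disjS) lerD2r -subr_ge0 Qmod_merge //.
rewrite pmulr_rge0 //.
have -> : weight E A B / vol V - vol A * vol B / vol V ^+ 2 =
          (weight E A B * vol V - vol A * vol B) / vol V ^+ 2.
  by field; rewrite gt_eqF.
by rewrite pmulr_lge0 ?invr_gt0 ?exprn_gt0 // subr_ge0.
Qed.

End Merging.

Lemma agree_volume (R : realType) (T : finType) (V1 V2 Va A : {set T})
    (E1 E2 : T -> T -> R) :
  agree V1 E1 V2 E2 Va -> A \subset Va -> volume V1 E1 A = volume V2 E2 A.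
Proof.
case=> _ sameE zero1 zero2 /subsetP AVa; apply: eq_bigr => i /AVa iVa.
rewrite (big_setID V2) [RHS](big_setID V1) /= [V2 :&: V1]setIC.
rewrite [X in _ + X]big1 ?[X in _ = _ + X]big1 ?addr0 => [|j|j]; last 2 first.
- exact: zero2.
- exact: zero1.
by apply: eq_bigr => j; apply: sameE.
Qed.

Lemma agree_refl (R : realType) (T : finType) (V Va : {set T}) (E : T -> T -> R) :
  Va \subset V -> agree V E V E Va.
Proof. by split; rewrite ?setIid // => i j _; rewrite setDv inE. Qed.

Section Example.
Variable R : realType.

Definition va : 'I_3 := @Ordinal 3 0 isT.
Definition vb : 'I_3 := @Ordinal 3 1 isT.
Definition vc : 'I_3 := @Ordinal 3 2 isT.

Definition example_weight (i j : 'I_3) : R :=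
  match nat_of_ord i, nat_of_ord j with
  | 0%N, 0%N | 1%N, 1%N => 2
  | 0%N, 1%N | 1%N, 0%N => 1
  | 2%N, 2%N => 10
  | _, _ => 0
  end.

Local Notation E := example_weight.
Local Notation Va := [set va; vb].
Local Notation V1 := (vc |: Va).

Lemma example_is_graph (V : {set 'I_3}) : is_graph V E.
Proof.
by move=> [[|[|[|?]]] ?] [[|[|[|?]]] ?] //= _ _; split; rewrite ?ler0n.
Qed.

Lemma example_V1DVa : V1 :\: Va = [set vc].
Proof. by apply/setP => -[[|[|[|?]]] ?]; rewrite !inE. Qed.

Lemma example_agree : agree V1 E Va E Va.
Proof.
split=> //; first by rewrite setIC (setIidPl (subsetUr _ _)).
  by move=> i j; rewrite example_V1DVa !inE => /orP[] /eqP-> /eqP->.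
by move=> i j _ /setDP[jVa]; rewrite inE jVa orbT.
Qed.

Lemma example_volume_V1 : volume V1 E V1 = 16.
Proof. by rewrite /volume !(big_setU1, big_set1) ?inE //= /E /=; lra. Qed.

Lemma example_volume_Va : volume Va E Va = 6.
Proof. by rewrite /volume !sum_set2 //= /E /=; lra. Qed.

Lemma example_volume_set1 (x : 'I_3) : x \in Va -> volume Va E [set x] = 3.
Proof.
by rewrite !inE => /orP[]/eqP->; rewrite /volume big_set1 sum_set2 //= /E /=; lra.
Qed.

Lemma example_partition_split : partition [set [set va]; [set vb]] Va.
Proof. by apply: partition_set2; rewrite ?set1_neq0 // disjoints1 inE. Qed.

Lemma example_merge_ge (V : {set 'I_3}) (C : {set {set 'I_3}}) :
  agree V E Va E Va -> partition C (V :\: Va) -> 0 < volume V E V ->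
  (Qmod V E ([set [set va]; [set vb]] :|: C) <= Qmod V E ([set Va] :|: C)) =
  (9 <= volume V E V).
Proof.
move=> hV hC vV_gt0.
have vol_set1 x : x \in Va -> volume V E [set x] = 3.
  by move=> xVa; rewrite (agree_volume hV) ?sub1set // example_volume_set1.
have va_neq0 := set1_neq0 va.
have ab : [disjoint [set va] & [set vb]] by rewrite disjoints1 inE.
have symE : {in [set va] & [set vb], forall i j, E i j = E j i}.
  by move=> i j; rewrite !inE => /eqP-> /eqP->.
have disj_merged : [disjoint [set Va] & C].
  exact: disjoint_partitions (partition_set1 (setU1_neq0 _ _)) hC (disjoint_setD _ _).
have disj_split : [disjoint [set [set va]; [set vb]] & C].
  exact: disjoint_partitions example_partition_split hC (disjoint_setD _ _).
rewrite Qmod_merge_ge // !vol_set1 ?inE ?eqxx ?orbT //.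
by rewrite /weight !big_set1 mul1r -natrM.
Qed.

End Example.

Theorem theorem2 (R : realType) :
  exists (n : nat) (V1 V2 Va : {set 'I_n}) (E1 E2 : 'I_n -> 'I_n -> R)
         (Ca Da C1 C2 : {set {set 'I_n}}),
    is_graph V1 E1 /\ is_graph V2 E2 /\
    0 < volume V1 E1 V1 /\ 0 < volume V2 E2 V2 /\
    agree V1 E1 V2 E2 Va /\
    clustering Ca Va /\ clustering Da Va /\
    clustering C1 (V1 :\: Va) /\ clustering C2 (V2 :\: Va) /\
    Qmod V1 E1 (Ca :|: C1) >= Qmod V1 E1 (Da :|: C1) /\
    Qmod V2 E2 (Ca :|: C2) < Qmod V2 E2 (Da :|: C2).
Proof.
set Va := [set va; vb]; set V1 := vc |: Va.
have hC1 : partition [set [set vc]] (V1 :\: Va).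
  by rewrite example_V1DVa partition_set1 ?set1_neq0.
have hC2 : partition set0 (Va :\: Va) by rewrite setDv partition_set0.
have agreeVa : agree Va (example_weight R) Va (example_weight R) Va.
  exact: agree_refl.
exists 3%N, V1, Va, Va, (example_weight R), (example_weight R),
  [set Va], [set [set va]; [set vb]], [set [set vc]], set0.
rewrite example_volume_V1 example_volume_Va.
split; first exact: example_is_graph.
split; first exact: example_is_graph.
do 2!(split; first by rewrite ltr0n).
split; first exact: example_agree.
split; first exact/partition_set1/setU1_neq0.
split; first exact: example_partition_split.
do 2!(split=> //); split.
  by rewrite example_merge_ge ?example_volume_V1 ?ler_nat //; exact: example_agree.
by rewrite ltNge example_merge_ge ?example_volume_Va // -ltNge ltr_nat.
Qed.
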